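(* Let $s\ge 1$ and let $P^{(1)},\dots,P^{(s)}\in\mathbb{C}[z_1,\dots,z_d]$ be nonzero polynomials of total degrees $n_1,\dots,n_s$ respectively. Then \[ (n_1+\cdots+n_s)!\,\bigl\|P^{(1)}\cdots P^{(s)}\bigr\|_a^2\;\ge\;\bigl\|P^{(1)}\bigr\|_a^2\cdots\bigl\|P^{(s)}\bigr\|_a^2 . \]
   Context: For multi-indices $\alpha=(\alpha_1,\dots,\alpha_d)\in\mathbb{N}^d$ write $z^\alpha=z_1^{\alpha_1}\cdots z_d^{\alpha_d}$, $\alpha!=\alpha_1!\cdots\alpha_d!$, $|\alpha|=\alpha_1+\cdots+\alpha_d$. The apolar inner product on $\mathbb{C}[z_1,\dots,z_d]$ is defined, for $P=\sum_\alpha c_\alpha z^\alpha$ and $Q=\sum_\alpha d_\alpha z^\alpha$, by $\langle P,Q\rangle_a=\sum_{\alpha\in\mathbb{N}^d}\alpha!\,c_\alpha\overline{d_\alpha}$, and $\|P\|_a=\sqrt{\langle P,P\rangle_a}$. The total degree of $P$ is the largest $|\alpha|$ with $c_\alpha\neq0$. *)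

From mathcomp Require Import all_boot all_algebra.
From mathcomp Require Import complex.
From mathcomp Require Import Rstruct.
From mathcomp Require Import mpoly.
Import GRing.Theory Num.Theory.

Set Implicit Arguments. Unset Strict Implicit. Unset Printing Implicit Defensive.

Local Open Scope ring_scope.

Definition C := (Rdefinitions.R)[i].

Definition mfact (d : nat) (m : 'X_{1..d}) : nat := (\prod_(i < d) (m i)`!)%N.

(* apolar inner product <P,Q>_a = sum_alpha alpha! c_alpha conj(d_alpha);
   terms with alpha outside the support of P vanish, so summing over
   msupp P is exactly the full sum. *)
Definition apolar_inner (d : nat) (P Q : {mpoly C[d]}) : C :=
  \sum_(m <- msupp P) (mfact m)%:R * P@_m * (Q@_m)^*.

Definition apolar_norm (d : nat) (P : {mpoly C[d]}) : C :=
  sqrtC (apolar_inner P P).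

(* total degree of P (for P <> 0): msize P = 1 + max |alpha| over the support *)
Definition tdeg (d : nat) (P : {mpoly C[d]}) : nat := (msize P).-1.

(* Homogenizing a polynomial P of total degree n with one extra variable gives a
   form whose apolar square norm lies between ||P||_a^2 and n! ||P||_a^2, since the
   extra variable only adds a factor (n - |alpha|)! to each weight.  So it suffices
   to show ||F G||_a >= ||F||_a ||G||_a for forms F and G.  A coordinatewise
   Vandermonde identity writes ||F G||_a^2 as a sum of nonnegative terms
   |Y_f|^2 / W_f over labels f assigning a pair of exponents to each variable; the
   labels pairing an exponent of G with an exponent of F contribute exactly the
   products of the summands of ||F||_a^2 and ||G||_a^2, and the others are dropped. *)

From mathcomp Require Import all_boot all_order all_algebra.
From mathcomp Require Import complex.
From mathcomp Require Import Rstruct.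
From mathcomp Require Import mpoly ssrcomplements.
From mathcomp Require Import ring zify.
Import Order.TTheory GRing.Theory Num.Theory.
Set Implicit Arguments. Unset Strict Implicit. Unset Printing Implicit Defensive.
Local Open Scope ring_scope.

Lemma leq_summand (D : nat) (f : 'I_D -> nat) c : (f c <= \sum_i f i)%N.
Proof. by rewrite (bigD1 c) //= leq_addr. Qed.

Lemma eq_from_leq_sum (D : nat) (f g : 'I_D -> nat) :
  (forall c, f c <= g c)%N -> (\sum_c f c = \sum_c g c)%N -> forall c, f c = g c.
Proof.
move=> le_fg eq_sum c.
have [_] := leqif_sum (P := predT) (fun i _ => leqif_eq (le_fg i)).
by rewrite eq_sum eqxx => /esym/forall_inP/(_ c isT)/eqP.
Qed.

Lemma exchange_big4 (R : nmodType) (A1 A2 A3 A4 A5 : finType)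
    (G : A1 -> A2 -> A3 -> A4 -> A5 -> R) :
  \sum_a \sum_b \sum_c \sum_d \sum_e G a b c d e
  = \sum_e \sum_a \sum_b \sum_c \sum_d G a b c d e.
Proof.
under eq_bigr do under eq_bigr do under eq_bigr do rewrite exchange_big.
under eq_bigr do under eq_bigr do rewrite exchange_big.
under eq_bigr do rewrite exchange_big.
exact: exchange_big.
Qed.

Section FischerKernel.
Variable F : numClosedFieldType.

Lemma natr_fact_neq0 n : (n`!)%:R != 0 :> F.
Proof. by rewrite pnatr_eq0 -lt0n fact_gt0. Qed.

Lemma prodr_if_forall (D : nat) (P : pred 'I_D) (G : 'I_D -> F) :
  \prod_c (if P c then G c else 0) = if [forall c, P c] then \prod_c G c else 0.
Proof.
case: (boolP [forall c, P c]) => [/forallP h|].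
  by apply: eq_bigr => c _; rewrite h.
rewrite negb_forall => /existsP[c hc].
by rewrite (bigD1 c) //= (negbTE hc) mul0r.
Qed.

Definition fischer_kernel (b g a m : nat) : F :=
  if (a <= g)%N && (b + a == g + m)%N then (b`! * g`!)%:R / ((g - a)`!)%:R else 0.

Lemma fischer_kernel_conj b g a m : (fischer_kernel b g a m)^* = fischer_kernel b g a m.
Proof.
by rewrite /fischer_kernel; case: ifP; rewrite ?rmorph0 // fmorph_div !rmorph_nat.
Qed.

Lemma fischer_kernel_sum_shift (B b g b' g' a : nat) :
    (b + g = b' + g')%N -> (b + g < B)%N -> (a <= g)%N ->
  \sum_(m < B) fischer_kernel b g' a m * fischer_kernel b' g a m / ((a`!)%:R * (m`!)%:R)
  = (b`! * g`! * ('C(g', a) * 'C(b', g - a)))%:R.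
Proof.
move=> eq_deg ltB le_ag; have ltm : (b + a - g' < B)%N by lia.
rewrite (big_only1 (Ordinal ltm)) //=; last first.
  move=> m /eqP ne_m _; rewrite /fischer_kernel.
  case: ifP => [/andP[_ /eqP e]|]; last by rewrite !mul0r.
  by case: ne_m; apply: val_inj => /=; lia.
rewrite /fischer_kernel.
have [lt_g'a|le_ag'] := ltnP g' a; first by rewrite /= !mul0r (bin_small lt_g'a) muln0.
have [lt_bag'|le_g'ba] := ltnP (b + a) g'.
  have -> : (b + a == g' + (b + a - g'))%N = false by apply/eqP; lia.
  by rewrite andbF /= !mul0r (@bin_small b' (g - a)) ?muln0 //; lia.
have -> : (b + a == g' + (b + a - g'))%N by apply/eqP; lia.
have -> : (b' + a == g + (b + a - g'))%N by apply/eqP; lia.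
rewrite le_ag /=.
have le_gab' : (g - a <= b')%N by lia.
have Eg' := bin_fact le_ag'; have Eb' := bin_fact le_gab'.
rewrite (_ : b' - (g - a) = b + a - g')%N in Eb'; last by lia.
rewrite -{1}Eg' -{1}Eb' !natrM.
by field; rewrite !natr_fact_neq0.
Qed.

(* The right-hand side is the apolar product of z^(b+g) and z^(b'+g'); on the
   diagonal the identity is Vandermonde's convolution. *)
Lemma sum_fischer_kernel (B b g b' g' : nat) : (b + g < B)%N -> (b' + g' < B)%N ->
  \sum_(a < B) \sum_(m < B)
      fischer_kernel b g' a m * fischer_kernel b' g a m / ((a`!)%:R * (m`!)%:R)
  = if (b + g == b' + g')%N then ((b + g)`!)%:R else 0.
Proof.
move=> ltB ltB'; case: eqP => [eq_deg|ne_deg]; last first.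
  apply: big1 => a _; apply: big1 => m _; rewrite /fischer_kernel.
  case: ifP => [/andP[_ /eqP e1]|]; last by rewrite !mul0r.
  case: ifP => [/andP[_ /eqP e2]|]; last by rewrite mulr0 mul0r.
  by case: ne_deg; lia.
pose T a := (b`! * g`! * ('C(g', a) * 'C(b', g - a)))%N.
transitivity (\sum_(a < B | (a < g.+1)%N) (T a)%:R : F).
  rewrite [RHS]big_mkcond /=; apply: eq_bigr => a _; rewrite ltnS.
  case: leqP => [le_ag|lt_ga]; first exact: fischer_kernel_sum_shift.
  by apply: big1 => m _; rewrite [fischer_kernel b' _ _ _]/fischer_kernel leqNgt lt_ga mulr0 mul0r.
rewrite -(big_ord_widen _ (fun a => (T a)%:R : F)); last by lia.
rewrite -natr_sum -big_distrr /= binomial.Vandermonde (_ : g' + b' = b + g)%N; last by lia.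
by rewrite -(bin_fact (leq_addl b g)) addnK mulnC (mulnC b`!).
Qed.

End FischerKernel.

Section ApolarProduct.
Variables (F : numClosedFieldType) (D : nat).

(* With exponent maps [e], [e'] and coefficients [p], [q], these are the apolar
   square norms of sum_x p x z^(e x) (for injective [e]) and of the product
   (sum_x p x z^(e x)) (sum_y q y z^(e' y)), expanded bilinearly. *)
Definition apolar_sq (I : finType) (e : I -> 'I_D -> nat) (p : I -> F) : F :=
  \sum_x (\prod_c (e x c)`!)%:R * (p x * (p x)^*).

Definition apolar_prod_sq (I J : finType) (e : I -> 'I_D -> nat)
    (e' : J -> 'I_D -> nat) (p : I -> F) (q : J -> F) : F :=
  \sum_x \sum_y \sum_x' \sum_y'
    ((if [forall c, e x c + e' y c == e x' c + e' y' c]%N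
      then (\prod_c (e x c + e' y c)`!)%:R else 0) * (p x * q y) * (p x' * q y')^*).

Lemma apolar_sq_ge0 (I : finType) (e : I -> 'I_D -> nat) (p : I -> F) :
  0 <= apolar_sq e p.
Proof. by rewrite sumr_ge0 // => x _; rewrite mulr_ge0 ?ler0n ?mul_conjC_ge0. Qed.

Section Homogeneous.
Variables (I J : finType) (n k : nat).
Variables (eP : I -> 'I_D -> nat) (eQ : J -> 'I_D -> nat) (p : I -> F) (q : J -> F).
Hypothesis eP_homog : forall x, (\sum_c eP x c = n)%N.
Hypothesis eQ_homog : forall y, (\sum_c eQ y c = k)%N.
Hypothesis eP_inj : forall x x', (forall c, eP x c = eP x' c) -> x = x'.
Hypothesis eQ_inj : forall y y', (forall c, eQ y c = eQ y' c) -> y = y'.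

Local Notation B := (n + k).+1.
Local Notation label := {ffun 'I_D -> 'I_B * 'I_B}.

Definition kernel x y (f : label) : F :=
  \prod_c fischer_kernel F (eP x c) (eQ y c) (f c).1 (f c).2.

Definition label_weight (f : label) : F := \prod_c (((f c).1)`!%:R * (((f c).2)`!)%:R).

Definition kernel_transform (f : label) : F := \sum_x \sum_y kernel x y f * (p x * (q y)^*).

Lemma eP_le x c : (eP x c <= n)%N.
Proof. by rewrite -(eP_homog x) leq_summand. Qed.

Lemma eQ_le y c : (eQ y c <= k)%N.
Proof. by rewrite -(eQ_homog y) leq_summand. Qed.

Lemma kernel_conj x y f : (kernel x y f)^* = kernel x y f.
Proof. by rewrite rmorph_prod; apply: eq_bigr => c _; exact: fischer_kernel_conj. Qed.

Lemma sum_kernel x y x' y' :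
  (if [forall c, eP x c + eQ y c == eP x' c + eQ y' c]%N
   then (\prod_c (eP x c + eQ y c)`!)%:R else 0)
  = \sum_(f : label) kernel x y' f * kernel x' y f / label_weight f.
Proof.
rewrite natr_prod -(prodr_if_forall (fun c => eP x c + eQ y c == eP x' c + eQ y' c)%N).
transitivity (\prod_c \sum_(u : 'I_B * 'I_B) fischer_kernel F (eP x c) (eQ y' c) u.1 u.2
   * fischer_kernel F (eP x' c) (eQ y c) u.1 u.2 / ((u.1`!)%:R * (u.2`!)%:R)).
  apply: eq_bigr => c _; rewrite -(pair_bigA _ (fun a m : 'I_B =>
     fischer_kernel F (eP x c) (eQ y' c) a m * fischer_kernel F (eP x' c) (eQ y c) a m
     / ((a`!)%:R * (m`!)%:R))) /=.
  move: (eP_le x c) (eQ_le y c) (eP_le x' c) (eQ_le y' c) => *.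
  by rewrite sum_fischer_kernel //; lia.
rewrite bigA_distr_bigA /=; apply: eq_bigr => f _.
by rewrite prodf_div big_split.
Qed.

Lemma apolar_prod_sq_sum_sq :
  apolar_prod_sq eP eQ p q
  = \sum_(f : label) (label_weight f)^-1 * (kernel_transform f * (kernel_transform f)^*).
Proof.
transitivity (\sum_x \sum_y \sum_x' \sum_y' \sum_(f : label)
   (kernel x y' f * kernel x' y f / label_weight f) * (p x * q y) * (p x' * q y')^*).
  do 4 (apply: eq_bigr => ? _); by rewrite sum_kernel !mulr_suml.
rewrite exchange_big4; apply: eq_bigr => f _.
rewrite /kernel_transform mulr_suml mulr_sumr; apply: eq_bigr => x _.
under eq_bigr do rewrite exchange_big; rewrite exchange_big /=.
under eq_bigr do rewrite exchange_big.
rewrite mulr_suml mulr_sumr; apply: eq_bigr => y' _.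
rewrite rmorph_sum !mulr_sumr; apply: eq_bigr => x' _.
rewrite rmorph_sum !mulr_sumr; apply: eq_bigr => y _.
by rewrite !rmorphM /= conjCK kernel_conj; ring.
Qed.

Definition diag_label (z : J * I) : label :=
  [ffun c => (inord (eQ z.1 c), inord (eP z.2 c))].

Lemma diag_labelE z c :
  ((diag_label z c).1 : nat) = eQ z.1 c /\ ((diag_label z c).2 : nat) = eP z.2 c.
Proof.
move: (eP_le z.2 c) (eQ_le z.1 c) => *.
by rewrite ffunE /= !inordK //; lia.
Qed.

Lemma diag_label_inj : injective diag_label.
Proof.
move=> [y x] [y' x'] /ffunP eq_f.
have eq_e c : eQ y c = eQ y' c /\ eP x c = eP x' c.
  by have [<- <-] := diag_labelE (y, x) c; have [<- <-] := diag_labelE (y', x') c; rewrite eq_f.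
by rewrite (eQ_inj (fun c => (eq_e c).1)) (eP_inj (fun c => (eq_e c).2)).
Qed.

Definition diag_weight y0 x0 : F := (\prod_c ((eP x0 c)`! * (eQ y0 c)`!))%:R.

(* Homogeneity forces [eQ y0 <= eQ y'] coordinatewise to be an equality. *)
Lemma kernel_diag_label x y' y0 x0 :
  kernel x y' (diag_label (y0, x0)) = if (x == x0) && (y' == y0) then diag_weight y0 x0 else 0.
Proof.
transitivity (\prod_c fischer_kernel F (eP x c) (eQ y' c) (eQ y0 c) (eP x0 c)).
  by apply: eq_bigr => c _; have [-> ->] := diag_labelE (y0, x0) c.
case: ifP => [/andP[/eqP -> /eqP ->]|ne].
  rewrite /diag_weight natr_prod; apply: eq_bigr => c _.
  by rewrite /fischer_kernel leqnn addnC eqxx /= subnn fact0 divr1.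
rewrite /fischer_kernel (prodr_if_forall (fun c =>
  (eQ y0 c <= eQ y' c)%N && (eP x c + eQ y0 c == eQ y' c + eP x0 c)%N)).
case: forallP => // H; exfalso.
have le_y c : (eQ y0 c <= eQ y' c)%N by case/andP: (H c).
have eq_y := eq_from_leq_sum le_y (etrans (eQ_homog y0) (esym (eQ_homog y'))).
have eq_y' : y' = y0 by apply: eQ_inj => c; rewrite eq_y.
have eq_x : x = x0 by apply: eP_inj => c; case/andP: (H c) => _ /eqP; rewrite eq_y; lia.
by rewrite eq_y' eq_x !eqxx in ne.
Qed.

Lemma diag_weight_neq0 y0 x0 : diag_weight y0 x0 != 0.
Proof. by rewrite pnatr_eq0 -lt0n prodn_gt0 // => c; rewrite muln_gt0 !fact_gt0. Qed.

Lemma diag_label_sq y0 x0 (f := diag_label (y0, x0)) :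
  (label_weight f)^-1 * (kernel_transform f * (kernel_transform f)^*)
  = diag_weight y0 x0 * (p x0 * (p x0)^*) * (q y0 * (q y0)^*).
Proof.
have -> : label_weight f = diag_weight y0 x0.
  rewrite /diag_weight natr_prod; apply: eq_bigr => c _.
  by have [-> ->] := diag_labelE (y0, x0) c; rewrite natrM mulrC.
have -> : kernel_transform f = diag_weight y0 x0 * (p x0 * (q y0)^*).
  rewrite /kernel_transform (bigD1 x0) //= [X in _ + X]big1 ?addr0; last first.
    by move=> x ne; apply: big1 => y _; rewrite kernel_diag_label (negbTE ne) mul0r.
  rewrite (bigD1 y0) //= [X in _ + X]big1 ?addr0; last first.
    by move=> y ne; rewrite kernel_diag_label eqxx (negbTE ne) mul0r.
  by rewrite kernel_diag_label !eqxx.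
have conj_w : (diag_weight y0 x0)^* = diag_weight y0 x0 by rewrite conjC_nat.
have nz := diag_weight_neq0 y0 x0.
by rewrite !rmorphM /= conj_w conjCK; field.
Qed.

Lemma apolar_sq_mul_le : apolar_sq eP p * apolar_sq eQ q <= apolar_prod_sq eP eQ p q.
Proof.
pose G f := (label_weight f)^-1 * (kernel_transform f * (kernel_transform f)^*).
have G_ge0 f : 0 <= G f.
  rewrite mulr_ge0 ?mul_conjC_ge0 // invr_ge0 prodr_ge0 // => c _.
  by rewrite mulr_ge0 ?ler0n.
have -> : apolar_sq eP p * apolar_sq eQ q = \sum_(z : J * I) G (diag_label z).
  rewrite -(pair_bigA _ (fun y x => G (diag_label (y, x)))) exchange_big /= /apolar_sq.
  rewrite mulr_suml; apply: eq_bigr => x _.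
  rewrite mulr_sumr; apply: eq_bigr => y _.
  by rewrite /G diag_label_sq /diag_weight big_split /= natrM; ring.
rewrite apolar_prod_sq_sum_sq -(big_imset G (h := diag_label) (A := predT)); last first.
  by move=> z1 z2 _ _; apply: diag_label_inj.
rewrite [X in _ <= X](bigID (fun f => f \in [set diag_label z | z in predT])) /=.
by rewrite lerDl sumr_ge0 // => f _; apply: G_ge0.
Qed.

End Homogeneous.
End ApolarProduct.

Lemma msize_mul_le (R : idomainType) (n : nat) (A B : {mpoly R[n]}) a b :
  (msize A <= a.+1)%N -> (msize B <= b.+1)%N -> (msize (A * B) <= (a + b).+1)%N.
Proof.
have [->|nzA] := eqVneq A 0; first by rewrite mul0r msize0.
have [->|nzB] := eqVneq B 0; first by rewrite mulr0 msize0.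
by rewrite msizeM //; lia.
Qed.

Section HomogeneousExponents.
Variable d : nat.

(* Exponents of the degree-n homogenization of z^m: the extra last variable
   carries n - |m|. *)
Definition hom_exp (n : nat) (m : 'X_{1..d}) (c : 'I_d.+1) : nat :=
  if unlift ord_max c is Some i then m i else (n - mdeg m)%N.

Lemma hom_exp_lift n m (i : 'I_d) : hom_exp n m (lift ord_max i) = m i.
Proof. by rewrite /hom_exp liftK. Qed.

Lemma hom_exp_max n m : hom_exp n m ord_max = (n - mdeg m)%N.
Proof. by rewrite /hom_exp unlift_none. Qed.

Lemma hom_exp_widen n m (i : 'I_d) : hom_exp n m (widen_ord (leqnSn d) i) = m i.
Proof.
have -> : widen_ord (leqnSn d) i = lift ord_max i by apply: val_inj; rewrite /= [RHS]lift_max.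
exact: hom_exp_lift.
Qed.

Lemma sum_hom_exp n m : (mdeg m <= n)%N -> (\sum_c hom_exp n m c = n)%N.
Proof.
move=> le_mn; rewrite big_ord_recr /= hom_exp_max.
under eq_bigr do rewrite hom_exp_widen.
by rewrite -mdegE; lia.
Qed.

Lemma prod_fact_hom_exp n m :
  (\prod_c (hom_exp n m c)`! = mfact m * (n - mdeg m)`!)%N.
Proof. by rewrite big_ord_recr /= hom_exp_max; under eq_bigr do rewrite hom_exp_widen. Qed.

Lemma hom_expD n k x y c : (mdeg x <= n)%N -> (mdeg y <= k)%N ->
  (hom_exp n x c + hom_exp k y c = hom_exp (n + k) (x + y) c)%N.
Proof.
move=> le_xn le_yk; rewrite /hom_exp; case: (unlift ord_max c) => [i|].
  by rewrite mnmDE.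
by rewrite mdegD; lia.
Qed.

Lemma hom_exp_inj n x x' : (forall c, hom_exp n x c = hom_exp n x' c) -> x = x'.
Proof. by move=> h; apply/mnmP => i; have := h (lift ord_max i); rewrite !hom_exp_lift. Qed.

Lemma eq_hom_expD n k x y x' y' :
    (mdeg x <= n)%N -> (mdeg y <= k)%N -> (mdeg x' <= n)%N -> (mdeg y' <= k)%N ->
  (x + y == x' + y')%MM
  = [forall c, hom_exp n x c + hom_exp k y c == hom_exp n x' c + hom_exp k y' c]%N.
Proof.
move=> le_xn le_yk le_x'n le_y'k; apply/eqP/forallP => [eq_xy c|eq_c].
  by rewrite !hom_expD // eq_xy.
by apply: (@hom_exp_inj (n + k)) => c; have /eqP := eq_c c; rewrite !hom_expD.
Qed.

End HomogeneousExponents.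

Section BoundedSupport.
Variables (R : ringType) (d : nat).

Lemma big_msupp_bounded (P : {mpoly R[d]}) b (G : 'X_{1..d} -> R) :
    (msize P <= b)%N -> (forall m, m \notin msupp P -> G m = 0) ->
  \sum_(m <- msupp P) G m = \sum_(m : 'X_{1..d < b}) G m.
Proof.
move=> le_Pb G0; rewrite (big_mksub ('X_{1..d < b} : subFinType _)) /=; last 2 first.
- exact: msupp_uniq.
- by move=> x /msize_mdeg_lt /leq_trans; apply.
by rewrite big_rmcond //= => i; apply: G0.
Qed.

Lemma mcoeffM_bounded (P Q : {mpoly R[d]}) a b m :
    (msize P <= a)%N -> (msize Q <= b)%N ->
  (P * Q)@_m = \sum_(x : 'X_{1..d < a}) \sum_(y : 'X_{1..d < b})
      (if (x + y == m)%MM then P@_x * Q@_y else 0).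
Proof.
move=> le_Pa le_Qb; rewrite mpolyME big_allpairs raddf_sum /=.
rewrite (big_msupp_bounded (G := fun x =>
  (\sum_(y <- msupp Q) (P@_x * Q@_y) *: 'X_[x + y])@_m) le_Pa); last first.
  move=> x /memN_msupp_eq0 Px0; rewrite raddf_sum /= big1 // => y _.
  by rewrite Px0 mul0r scale0r mcoeff0.
apply: eq_bigr => x _; rewrite raddf_sum /=.
rewrite (big_msupp_bounded (G := fun y => ((P@_x * Q@_y) *: 'X_[x + y])@_m) le_Qb); last first.
  by move=> y /memN_msupp_eq0 Qy0; rewrite Qy0 mulr0 scale0r mcoeff0.
apply: eq_bigr => y _; rewrite mcoeffZ mcoeffX.
by case: eqP; rewrite ?mulr1 ?mulr0.
Qed.

End BoundedSupport.

Section Homogenization.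
Variable d : nat.

Definition hom_apolar (n : nat) (P : {mpoly C[d]}) : C :=
  apolar_sq (fun x : 'X_{1..d < n.+1} => hom_exp n x) (fun x => P@_x).

Lemma apolar_inner_bounded (P : {mpoly C[d]}) b : (msize P <= b)%N ->
  apolar_inner P P = \sum_(x : 'X_{1..d < b}) (mfact x)%:R * (P@_x * (P@_x)^*).
Proof.
move=> le_Pb; rewrite /apolar_inner (big_msupp_bounded (G := fun m =>
  (mfact m)%:R * P@_m * (P@_m)^*) le_Pb).
  by apply: eq_bigr => x _; rewrite mulrA.
by move=> m /memN_msupp_eq0 ->; rewrite mulr0 mul0r.
Qed.

Lemma hom_apolarM (P Q : {mpoly C[d]}) n k : (msize P <= n.+1)%N -> (msize Q <= k.+1)%N ->
  hom_apolar (n + k) (P * Q)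
  = apolar_prod_sq (fun x : 'X_{1..d < n.+1} => hom_exp n x)
      (fun y : 'X_{1..d < k.+1} => hom_exp k y) (fun x => P@_x) (fun y => Q@_y).
Proof.
move=> le_P le_Q; rewrite /hom_apolar /apolar_sq /apolar_prod_sq.
transitivity (\sum_(m : 'X_{1..d < (n + k).+1})
  \sum_(x : 'X_{1..d < n.+1}) \sum_(y : 'X_{1..d < k.+1})
  \sum_(x' : 'X_{1..d < n.+1}) \sum_(y' : 'X_{1..d < k.+1})
   (\prod_c (hom_exp (n + k) m c)`!)%:R *
   ((if (x + y == m)%MM then P@_x * Q@_y else 0) *
    (if (x' + y' == m)%MM then P@_x' * Q@_y' else 0)^*)).
  apply: eq_bigr => m _; rewrite (mcoeffM_bounded m le_P le_Q) mulr_suml mulr_sumr.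
  apply: eq_bigr => x _; rewrite mulr_suml mulr_sumr; apply: eq_bigr => y _.
  by rewrite rmorph_sum !mulr_sumr; apply: eq_bigr => x' _; rewrite rmorph_sum !mulr_sumr.
rewrite -exchange_big4; apply: eq_bigr => x _; apply: eq_bigr => y _.
apply: eq_bigr => x' _; apply: eq_bigr => y' _.
move: (bmdeg x) (bmdeg y) (bmdeg x') (bmdeg y') => *.
have lt_xy : (mdeg (x + y)%MM < (n + k).+1)%N by rewrite mdegD; lia.
rewrite (big_only1 (BMultinom lt_xy)) //=; last first.
  move=> m ne_m _; rewrite (_ : (x + y == val m)%MM = false) ?mul0r ?mulr0 //.
  by apply: contraNF ne_m => /eqP eq_m; apply/eqP/val_inj.
rewrite eqxx -eq_hom_expD; try lia.
rewrite [(x' + y' == _)%MM]eq_sym; case: eqP => _; last by rewrite rmorph0 !mulr0 !mul0r.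
rewrite mulrA; congr (_%:R * _ * _); apply: eq_bigr => c _.
by rewrite hom_expD //; lia.
Qed.

Lemma hom_apolarM_ge (P Q : {mpoly C[d]}) n k : (msize P <= n.+1)%N -> (msize Q <= k.+1)%N ->
  hom_apolar n P * hom_apolar k Q <= hom_apolar (n + k) (P * Q).
Proof.
move=> le_P le_Q; rewrite hom_apolarM //.
apply: apolar_sq_mul_le => [x|y|x x'|y y'].
- by apply: sum_hom_exp; have := bmdeg x; lia.
- by apply: sum_hom_exp; have := bmdeg y; lia.
- by move/hom_exp_inj; apply: val_inj.
- by move/hom_exp_inj; apply: val_inj.
Qed.

Lemma apolar_inner_ge0 (P : {mpoly C[d]}) : 0 <= apolar_inner P P.
Proof.
by rewrite sumr_ge0 // => x _; rewrite -mulrA mulr_ge0 ?ler0n ?mul_conjC_ge0.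
Qed.

Lemma apolar_inner_le_hom n (P : {mpoly C[d]}) : (msize P <= n.+1)%N ->
  apolar_inner P P <= hom_apolar n P.
Proof.
move=> le_P; rewrite (apolar_inner_bounded le_P); apply: ler_sum => x _.
rewrite ler_wpM2r ?mul_conjC_ge0 // ler_nat prod_fact_hom_exp.
by rewrite leq_pmulr // fact_gt0.
Qed.

Lemma hom_apolar_le_fact n (P : {mpoly C[d]}) : (msize P <= n.+1)%N ->
  hom_apolar n P <= (n`!)%:R * apolar_inner P P.
Proof.
move=> le_P; rewrite (apolar_inner_bounded le_P) mulr_sumr; apply: ler_sum => x _.
rewrite [X in _ <= X]mulrA -natrM ler_wpM2r ?mul_conjC_ge0 // ler_nat.
by rewrite prod_fact_hom_exp mulnC leq_mul2r leq_fact ?leq_subr ?orbT.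
Qed.

Lemma msize_prod_le s (P : 'I_s -> {mpoly C[d]}) :
  (msize (\prod_(i < s) P i) <= (\sum_(i < s) tdeg (P i)).+1)%N.
Proof.
elim: s P => [|s IH] P; first by rewrite !big_ord0 msize1.
rewrite !big_ord_recr /=; apply: msize_mul_le; first exact: IH.
exact: leqSpred.
Qed.

Lemma prod_hom_apolar_le s (P : 'I_s -> {mpoly C[d]}) :
  \prod_(i < s) hom_apolar (tdeg (P i)) (P i)
  <= hom_apolar (\sum_(i < s) tdeg (P i)) (\prod_(i < s) P i).
Proof.
elim: s P => [|s IH] P.
  rewrite !big_ord0; apply: le_trans (apolar_inner_le_hom _); last by rewrite msize1.
  rewrite /apolar_inner msupp1 big_seq1 mcoeff1 eqxx /= conjC1 !mulr1 /mfact.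
  by rewrite big1 // => i _; rewrite mnm0E.
rewrite !big_ord_recr /=.
apply: le_trans (hom_apolarM_ge (msize_prod_le _) (leqSpred _)).
by rewrite ler_wpM2r ?apolar_sq_ge0 ?IH.
Qed.

End Homogenization.

Theorem theorem3p1 (d s : nat) (P : 'I_s -> {mpoly C[d]}) :
  (1 <= s)%N ->
  (forall i, P i != 0) ->
  \prod_(i < s) apolar_norm (P i) ^+ 2
    <= ((\sum_(i < s) tdeg (P i))`!)%:R * apolar_norm (\prod_(i < s) P i) ^+ 2.
Proof.
move=> _ _; rewrite /apolar_norm sqrtCK; under eq_bigr do rewrite sqrtCK.
apply: le_trans (hom_apolar_le_fact (msize_prod_le P)).
apply: le_trans (prod_hom_apolar_le P).
by apply: ler_prod => i _; rewrite apolar_inner_ge0 apolar_inner_le_hom // leqSpred.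
Qed.
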